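(* Let $m\ge1$, let $A_1,\dots,A_m\in\mathbb{C}^{n\times n}$ be invertible, let $p_1,\dots,p_m>0$, and let $Q\in\mathbb{C}^{n\times n}$ be Hermitian positive definite. Then the equation $$X-\sum_{i=1}^{m}A_i^*X^{p_i}A_i=Q$$ has a Hermitian positive definite solution $X$ if and only if each $A_i$ can be factored as $$A_i=(U^*MU)^{-p_i/2}\,V_i\,N\,U,\qquad i=1,\dots,m,$$ where $U$ is unitary, $M$ is a real diagonal matrix with $M>UQU^*$, $N$ is Hermitian positive definite with $M-N^2=UQU^*$, and $V_1,\dots,V_m\in\mathbb{C}^{n\times n}$ satisfy that the block column $\begin{pmatrix}V_1\\ \vdots\\ V_m\end{pmatrix}$ is column orthonormal, i.e. $\sum_{i=1}^m V_i^*V_i=I$. In this case $X=U^*MU$ is a solution.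
   Context: For Hermitian $X,Y$, $X>Y$ means $X-Y$ is positive definite. For a Hermitian positive definite matrix $P$ and real $t$, $P^t$ is the principal matrix power defined via the spectral decomposition. *)

From Stdlib Require Import Reals ClassicalEpsilon.
From mathcomp Require Import all_boot.

Set Implicit Arguments.
Unset Strict Implicit.
Unset Printing Implicit Defensive.

Local Open Scope R_scope.

Record C := mkC { re : R; im : R }.
Definition C0 : C := mkC 0 0.
Definition C1 : C := mkC 1 0.
Definition RtoC (x : R) : C := mkC x 0.
Definition Cadd (a b : C) : C := mkC (re a + re b) (im a + im b).
Definition Copp (a : C) : C := mkC (- re a) (- im a).
Definition Cmul (a b : C) : C :=
  mkC (re a * re b - im a * im b) (re a * im b + im a * re b).
Definition Cconj (a : C) : C := mkC (re a) (- im a).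

Definition mat (n : nat) := 'I_n -> 'I_n -> C.
Definition vec (n : nat) := 'I_n -> C.

Definition Csum (n : nat) (f : 'I_n -> C) : C := \big[Cadd/C0]_(k < n) f k.

Definition mzero (n : nat) : mat n := fun _ _ => C0.
Definition mid (n : nat) : mat n := fun i j => if i == j then C1 else C0.
Definition madd (n : nat) (X Y : mat n) : mat n := fun i j => Cadd (X i j) (Y i j).
Definition msub (n : nat) (X Y : mat n) : mat n :=
  fun i j => Cadd (X i j) (Copp (Y i j)).
Definition mmul (n : nat) (X Y : mat n) : mat n :=
  fun i j => Csum (fun k => Cmul (X i k) (Y k j)).
Definition madj (n : nat) (X : mat n) : mat n := fun i j => Cconj (X j i).
Definition mdiag (n : nat) (d : 'I_n -> R) : mat n :=
  fun i j => if i == j then RtoC (d i) else C0.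
Definition msum (n m : nat) (F : 'I_m -> mat n) : mat n :=
  fun i j => \big[Cadd/C0]_(k < m) F k i j.

Definition hermitian (n : nat) (X : mat n) : Prop := madj X = X.
Definition quadform (n : nat) (X : mat n) (x : vec n) : C :=
  Csum (fun i => Csum (fun j => Cmul (Cconj (x i)) (Cmul (X i j) (x j)))).
Definition posdef (n : nat) (X : mat n) : Prop :=
  hermitian X /\ forall x : vec n, (exists i, x i <> C0) -> 0 < re (quadform X x).
Definition unitary (n : nat) (U : mat n) : Prop :=
  mmul (madj U) U = @mid n /\ mmul U (madj U) = @mid n.
Definition invertible (n : nat) (A : mat n) : Prop :=
  exists B : mat n, mmul A B = @mid n /\ mmul B A = @mid n.

Definition spec_pow (n : nat) (P : mat n) (t : R) (Y : mat n) : Prop :=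
  exists (W : mat n) (d : 'I_n -> R),
    unitary W /\ (forall i, 0 < d i) /\
    P = mmul (madj W) (mmul (mdiag d) W) /\
    Y = mmul (madj W) (mmul (mdiag (fun i => Rpower (d i) t)) W).

(* principal matrix power P^t (meaningful for Hermitian positive definite P,
   where the spectral power is unique); junk value P otherwise. *)
Definition matpow (n : nat) (P : mat n) (t : R) : mat n :=
  match excluded_middle_informative (exists Y, spec_pow P t Y) with
  | left H => proj1_sig (constructive_indefinite_description _ H)
  | right _ => P
  end.

From Pilot Require Import Defs.
From Stdlib Require Import Reals FunctionalExtensionality ClassicalEpsilon.
From mathcomp Require Import all_boot all_order all_algebra.
From mathcomp Require Import complex Rstruct lra.

(* Writing [X = W^* diag(d) W],
   the powers [X^t = spec W (d^t)] commute and multiply by adding exponents.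
   - Sufficiency ([factored_solution]): if [A_i = X^(-p_i/2) V_i N U] with
     [sum V_i^* V_i = 1], then [sum A_i^* X^(p_i) A_i = U^* N^2 U], so
     [X - sum_i ... = U^* (diag(d) - N^2) U = Q].
   - Necessity ([solution_factors]): the residual [S = sum A_i^* X^(p_i) A_i]
     is positive definite ([pdmx_gram], as the [A_i] are invertible and
     [m >= 1]), hence so is [diag(d) - W Q W^* = W S W^*]; take [N] its square
     root ([pdmx_sqrt]) and [V_i = X^(p_i/2) A_i W^* N^-1]. *)

Set Implicit Arguments.
Unset Strict Implicit.
Unset Printing Implicit Defensive.

Import GRing.Theory Num.Theory Order.TTheory.

Section Adjoint.
Local Open Scope ring_scope.
Local Open Scope sesquilinear_scope.
Context {C : numClosedFieldType}.

Lemma adjmxM m k l (A : 'M[C]_(m, k)) (B : 'M[C]_(k, l)) :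
  (A *m B)^t* = B^t* *m A^t*.
Proof. by rewrite trmx_mul map_mxM. Qed.

Lemma adjmx_sum m k l (F : 'I_l -> 'M[C]_(m, k)) :
  (\sum_(i < l) F i)^t* = \sum_(i < l) (F i)^t*.
Proof.
apply/matrixP => i j; rewrite !mxE !summxE rmorph_sum.
by apply: eq_bigr => x _; rewrite !mxE.
Qed.

Lemma unitarymx_adjK n (W : 'M[C]_n) : W \is unitarymx -> W^t* *m W = 1%:M.
Proof. by move=> /unitarymxP /mulmx1C. Qed.

Lemma unitarymx_inj n (W : 'M[C]_n) (v : 'cV[C]_n) :
  W \is unitarymx -> v != 0 -> W *m v != 0.
Proof.
move=> /unitarymx_adjK hW; apply: contra => /eqP Wv0.
by rewrite -[v]mul1mx -hW -mulmxA Wv0 mulmx0.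
Qed.
End Adjoint.

Section PositiveDefinite.
Local Open Scope ring_scope.
Local Open Scope sesquilinear_scope.
Context {R : rcfType} {n : nat}.
Implicit Types (P B : 'M[R[i]]_n) (v w : 'cV[R[i]]_n).

Definition qform P v : R[i] := (v^t* *m P *m v) 0 0.

Definition psdmx P := forall v, 0 <= complex.Re (qform P v).
Definition pdmx P := P^t* = P /\ forall v, v != 0 -> 0 < complex.Re (qform P v).

Lemma Re_sum m (F : 'I_m -> R[i]) :
  complex.Re (\sum_(i < m) F i) = \sum_(i < m) complex.Re (F i).
Proof.
have ReD : {morph @complex.Re R : a b / a + b >-> a + b} by move=> [a b] [c d].
exact: (big_morph _ ReD).
Qed.

Lemma Re_ge0 (z : R[i]) : 0 <= z -> 0 <= complex.Re z.
Proof. by rewrite lecE => /andP[]. Qed.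

Lemma Re_gt0 (z : R[i]) : 0 < z -> 0 < complex.Re z.
Proof. by rewrite ltcE => /andP[]. Qed.

Lemma ReB (z w : R[i]) : complex.Re (z - w) = complex.Re z - complex.Re w.
Proof. by case: z w => [? ?] [? ?]. Qed.

Lemma qformE P v :
  qform P v = \sum_i \sum_j (v i 0)^* * (P i j * v j 0).
Proof.
rewrite /qform mxE; under eq_bigr do rewrite mxE big_distrl /=.
rewrite exchange_big; apply: eq_bigr => i _; apply: eq_bigr => j _.
by rewrite !mxE mulrA.
Qed.

Lemma qform_congr P B v : qform (B^t* *m P *m B) v = qform P (B *m v).
Proof. by rewrite /qform adjmxM !mulmxA. Qed.

Lemma qformB P1 P2 v : qform (P1 - P2) v = qform P1 v - qform P2 v.
Proof. by rewrite /qform mulmxBr mulmxBl !mxE. Qed.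

Lemma qform_sum m (F : 'I_m -> 'M[R[i]]_n) v :
  qform (\sum_(i < m) F i) v = \sum_(i < m) qform (F i) v.
Proof. by rewrite /qform mulmx_sumr mulmx_suml summxE. Qed.

Lemma qform_diag (r : 'rV[R[i]]_n) w :
  qform (diag_mx r) w = \sum_k r 0 k * `|w k 0| ^+ 2.
Proof.
rewrite /qform -mulmxA mul_diag_mx mxE; apply: eq_bigr => k _.
by rewrite !mxE normCKC mulrCA.
Qed.

Lemma qform_delta (r : 'rV[R[i]]_n) k : qform (diag_mx r) (delta_mx k 0) = r 0 k.
Proof.
rewrite qform_diag (bigD1 k) //= big1 ?addr0 => [|i ik].
  by rewrite !mxE !eqxx /= normr1 expr1n mulr1.
by rewrite !mxE (negbTE ik) /= normr0 expr0n mulr0.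
Qed.

Lemma delta_neq0 k : delta_mx k 0 != 0 :> 'cV[R[i]]_n.
Proof. by apply/matrix0Pn; exists k, 0; rewrite mxE !eqxx oner_eq0. Qed.

Lemma pdmx_psd P : pdmx P -> psdmx P.
Proof.
move=> [_ posP] v; have [->|v0] := eqVneq v 0; last exact/ltW/posP.
by rewrite /qform mulmx0 mxE.
Qed.

Lemma psdmx_congr P B : psdmx P -> psdmx (B^t* *m P *m B).
Proof. by move=> psdP v; rewrite qform_congr. Qed.

Lemma pdmx_congr P B : pdmx P -> (forall v, v != 0 -> B *m v != 0) ->
  pdmx (B^t* *m P *m B).
Proof.
move=> [hermP posP] injB; split; first by rewrite !adjmxM trmxCK hermP mulmxA.
by move=> v v0; rewrite qform_congr; apply/posP/injB.
Qed.

Lemma pdmx_sum m (F : 'I_m -> 'M[R[i]]_n) (i0 : 'I_m) :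
  (forall i, (F i)^t* = F i) -> (forall i, psdmx (F i)) -> pdmx (F i0) ->
  pdmx (\sum_(i < m) F i).
Proof.
move=> hermF psdF [_ posF0]; split.
  by rewrite adjmx_sum; apply: eq_bigr => i _; exact: hermF.
move=> v v0; rewrite qform_sum Re_sum.
rewrite (bigD1 i0) //=; apply: ltr_pwDl; first exact: posF0.
by apply: sumr_ge0 => i _; exact: psdF.
Qed.
End PositiveDefinite.

Section SpectralCalculus.
Local Open Scope ring_scope.
Local Open Scope sesquilinear_scope.
Context {R : rcfType} {n : nat}.
Implicit Types (P W S : 'M[R[i]]_n) (a b d : 'I_n -> R) (v w : 'cV[R[i]]_n).

Definition dmx d : 'M[R[i]]_n := diag_mx (\row_k ((d k)%:C)%C).

Lemma eq_dmx a b : a =1 b -> dmx a = dmx b.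
Proof. by move=> ab; apply/matrixP => i j; rewrite !mxE ab. Qed.

Lemma dmx_adj d : (dmx d)^t* = dmx d.
Proof.
rewrite /dmx tr_diag_mx map_diag_mx; congr diag_mx.
by apply/rowP => k; rewrite !mxE; exact: conjc_real.
Qed.

Lemma dmxM a b : dmx a *m dmx b = dmx (fun k => a k * b k).
Proof. by rewrite mulmx_diag; congr diag_mx; apply/rowP => k; rewrite !mxE rmorphM. Qed.

Lemma dmx1 : dmx (fun _ => 1) = 1%:M.
Proof. by apply/matrixP => i j; rewrite !mxE; case: eqP. Qed.

Lemma qform_dmx d w : qform (dmx d) w = \sum_k ((d k)%:C)%C * `|w k 0| ^+ 2.
Proof. by rewrite qform_diag; apply: eq_bigr => k _; rewrite mxE. Qed.

Lemma psdmx_dmx d : (forall k, 0 <= d k) -> psdmx (dmx d).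
Proof.
move=> d_ge0 w; rewrite qform_dmx Re_sum; apply: sumr_ge0 => k _.
by apply: Re_ge0; rewrite mulr_ge0 ?exprn_ge0 // ler0c.
Qed.

Lemma pdmx_dmx d : (forall k, 0 < d k) -> pdmx (dmx d).
Proof.
move=> d_gt0; split; first exact: dmx_adj.
move=> w /matrix0Pn [k [j wk0]]; rewrite ord1 in wk0.
rewrite qform_dmx Re_sum (bigD1 k) //; apply: ltr_pwDl.
  by apply: Re_gt0; rewrite mulr_gt0 ?exprn_gt0 ?normr_gt0 // ltcR.
by apply: sumr_ge0 => i _; apply: Re_ge0; rewrite mulr_ge0 ?exprn_ge0 // ler0c ltW.
Qed.

(* If [diag(d) - P] is positive definite and [P] semidefinite then [d > 0]:
   evaluate both forms on the basis vectors. *)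
Lemma dmx_gt0 d P : pdmx (dmx d - P) -> psdmx P -> forall k, 0 < d k.
Proof.
move=> [_ posK] psdP k; have := posK _ (delta_neq0 k).
rewrite qformB qform_delta mxE ReB /= => pos.
have := psdP (delta_mx k 0); lra.
Qed.

(* [spec W d = W^* diag(d) W]: the Hermitian matrix with eigenvalues [d] whose
   eigenvectors are the rows of the unitary [W]. Functions of a Hermitian
   matrix act on [d] for a fixed [W]. *)
Definition spec W d : 'M[R[i]]_n := W^t* *m dmx d *m W.

Lemma eq_spec W a b : a =1 b -> spec W a = spec W b.
Proof. by move=> /eq_dmx ab; rewrite /spec ab. Qed.

Lemma spec_adj W d : (spec W d)^t* = spec W d.
Proof. by rewrite /spec !adjmxM trmxCK dmx_adj mulmxA. Qed.

Lemma specM W a b : W \is unitarymx ->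
  spec W a *m spec W b = spec W (fun k => a k * b k).
Proof. by move=> hW; rewrite /spec !mulmxA (mulmxtVK _ hW) -(mulmxA _ (dmx a)) dmxM. Qed.

Lemma spec1 W : W \is unitarymx -> spec W (fun _ => 1) = 1%:M.
Proof. by move=> hW; rewrite /spec dmx1 mulmx1 (unitarymx_adjK hW). Qed.

Lemma pdmx_spec W d : W \is unitarymx -> (forall k, 0 < d k) -> pdmx (spec W d).
Proof.
by move=> hW d_gt0; apply: pdmx_congr (pdmx_dmx d_gt0) _ => v; exact: unitarymx_inj.
Qed.

(* A matrix intertwining two diagonal matrices intertwines any function of
   them: if [S diag(a) = diag(b) S] then [S_ij = 0] unless [a_j = b_i]. *)
Lemma dmx_intertwine S a b (f : R -> R) : S *m dmx a = dmx b *m S ->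
  S *m dmx (fun k => f (a k)) = dmx (fun k => f (b k)) *m S.
Proof.
move=> /matrixP Sab; apply/matrixP => i j; have := Sab i j.
rewrite /dmx !mul_mx_diag !mul_diag_mx !mxE.
have [->|Sij0] := eqVneq (S i j) 0; first by move=> _; rewrite mul0r mulr0.
by rewrite [_ * S i j]mulrC => /(mulfI Sij0) /complexI ->; rewrite mulrC.
Qed.

Lemma spec_fun W1 W2 d1 d2 (f : R -> R) :
  W1 \is unitarymx -> W2 \is unitarymx -> spec W1 d1 = spec W2 d2 ->
  spec W1 (fun k => f (d1 k)) = spec W2 (fun k => f (d2 k)).
Proof.
move=> hW1 hW2 E; set S := W2 *m W1^t*.
have SW1 : S *m W1 = W2 by rewrite /S (mulmxKtV _ hW1).
have Sd : S *m dmx d1 = dmx d2 *m S.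
  have := congr1 (fun P => W2 *m P *m W1^t*) E.
  by rewrite /spec /S !mulmxA (mulmxtVK _ hW1) (unitarymxP hW2) mul1mx.
rewrite /spec -{2}SW1 mulmxA -(mulmxA _ _ S) -(dmx_intertwine f Sd).
by rewrite /S !mulmxA (unitarymx_adjK hW2) mul1mx.
Qed.

Lemma spectral_pdmx P : pdmx P ->
  exists W d, [/\ W \is unitarymx, forall k, 0 < d k & P = spec W d].
Proof.
move=> [hermP posP]; have herm : P \is hermsymmx.
  by apply/is_hermitianmxP; rewrite expr0 scale1r hermP.
have := hermitian_normalmx herm => /orthomx_spectralP.
set W := spectralmx P; set sp := spectral_diag P.
have hW : W \is unitarymx := spectral_unitarymx P.
rewrite (invmx_unitary hW) => EP.
have sp_real k : ((complex.Re (sp 0 k))%:C)%C = sp 0 k.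
  exact/RRe_real/(mxOverP (hermitian_spectral_diag_real herm)).
have sp_pos k : 0 < complex.Re (sp 0 k).
  have hWt : W^t* \is unitarymx by rewrite trmxC_unitary.
  have := posP _ (unitarymx_inj hWt (delta_neq0 k)).
  by rewrite EP qform_congr mulmxA (unitarymxP hW) mul1mx qform_delta.
have sp_dmx : diag_mx sp = dmx (fun k => complex.Re (sp 0 k)).
  by congr diag_mx; apply/rowP => k; rewrite mxE sp_real.
by exists W, (fun k => complex.Re (sp 0 k)); split; rewrite // EP sp_dmx.
Qed.

Lemma pdmx_sqrt P : pdmx P -> exists N Ni,
  [/\ pdmx N, N *m N = P, Ni *m N = 1%:M, N *m Ni = 1%:M & Ni^t* = Ni].
Proof.
move=> /spectral_pdmx [W [mu [hW mu_gt0 ->]]].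
have sqrt_gt0 k : 0 < Num.sqrt (mu k) by rewrite sqrtr_gt0.
exists (spec W (fun k => Num.sqrt (mu k))), (spec W (fun k => (Num.sqrt (mu k))^-1)).
split; [exact: pdmx_spec | | | | exact: spec_adj].
- by rewrite (specM _ _ hW); apply: eq_spec => k; rewrite -expr2 sqr_sqrtr // ltW.
- by rewrite (specM _ _ hW) -(spec1 hW); apply: eq_spec => k; rewrite mulVf // gt_eqF.
- by rewrite (specM _ _ hW) -(spec1 hW); apply: eq_spec => k; rewrite mulfV // gt_eqF.
Qed.
End SpectralCalculus.

Section MatrixEquation.
Local Open Scope ring_scope.
Local Open Scope sesquilinear_scope.
Context {R : rcfType} {n m : nat}.
Implicit Types (U W N Q : 'M[R[i]]_n) (d : 'I_n -> R).

Lemma factored_gram U N (V P Rm : 'I_m -> 'M[R[i]]_n) :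
  N^t* = N -> (forall i, (P i)^t* = P i) ->
  (forall i, P i *m Rm i *m P i = 1%:M) -> \sum_i (V i)^t* *m V i = 1%:M ->
  \sum_i (P i *m V i *m N *m U)^t* *m Rm i *m (P i *m V i *m N *m U) =
  U^t* *m (N *m N) *m U.
Proof.
move=> hermN hermP PRP isoV.
have term i : (P i *m V i *m N *m U)^t* *m Rm i *m (P i *m V i *m N *m U) =
    U^t* *m N *m ((V i)^t* *m V i) *m N *m U.
  have XPRP X : X *m P i *m Rm i *m P i = X by rewrite -[RHS]mulmx1 -(PRP i) !mulmxA.
  by rewrite !adjmxM hermN hermP !mulmxA XPRP.
rewrite (eq_bigr _ (fun i _ => term i)) -!mulmx_suml -mulmx_sumr isoV mulmx1.
by rewrite !mulmxA.
Qed.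

Lemma factored_solution U N Q d (V P Rm : 'I_m -> 'M[R[i]]_n) :
  U \is unitarymx -> N^t* = N -> (forall i, (P i)^t* = P i) ->
  (forall i, P i *m Rm i *m P i = 1%:M) -> \sum_i (V i)^t* *m V i = 1%:M ->
  dmx d - N *m N = U *m Q *m U^t* ->
  spec U d - \sum_i (P i *m V i *m N *m U)^t* *m Rm i *m (P i *m V i *m N *m U) = Q.
Proof.
move=> hU hermN hermP PRP isoV MNQ.
rewrite factored_gram // /spec -mulmxBl -mulmxBr MNQ !mulmxA.
by rewrite (unitarymx_adjK hU) mul1mx (mulmxKtV _ hU).
Qed.

Lemma pdmx_gram (i0 : 'I_m) (A Rm : 'I_m -> 'M[R[i]]_n) :
  (forall i (v : 'cV[R[i]]_n), v != 0 -> A i *m v != 0) -> (forall i, pdmx (Rm i)) ->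
  pdmx (\sum_i (A i)^t* *m Rm i *m A i).
Proof.
move=> injA pdR; apply: (pdmx_sum (i0 := i0)) => [i|i v|].
- by have [hermR _] := pdR i; rewrite !adjmxM trmxCK hermR mulmxA.
- exact/psdmx_congr/pdmx_psd.
- exact: pdmx_congr (pdR i0) (injA i0).
Qed.

Lemma solution_factors (i0 : 'I_m) W d Q (A Rm H G : 'I_m -> 'M[R[i]]_n) :
  W \is unitarymx -> (forall i (v : 'cV[R[i]]_n), v != 0 -> A i *m v != 0) ->
  (forall i, pdmx (Rm i)) -> (forall i, (H i)^t* = H i) ->
  (forall i, H i *m H i = Rm i) -> (forall i, G i *m H i = 1%:M) ->
  spec W d - \sum_i (A i)^t* *m Rm i *m A i = Q ->
  exists N (V : 'I_m -> 'M[R[i]]_n),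
    [/\ pdmx (dmx d - W *m Q *m W^t*), pdmx N, dmx d - N *m N = W *m Q *m W^t*,
        \sum_i (V i)^t* *m V i = 1%:M & forall i, A i = G i *m V i *m N *m W].
Proof.
move=> hW injA pdR hermH HHR GH XQ; set S := \sum_i _ in XQ.
have KS : dmx d - W *m Q *m W^t* = W *m S *m W^t*.
  rewrite -XQ mulmxBr mulmxBl /spec !mulmxA (unitarymxP hW) mul1mx (mulmxtVK _ hW).
  by rewrite opprB addrC subrK.
have pdK : pdmx (dmx d - W *m Q *m W^t*).
  have hWt : W^t* \is unitarymx by rewrite trmxC_unitary.
  rewrite KS -{1}[W]trmxCK; apply: pdmx_congr; first exact: pdmx_gram.
  by move=> v; exact: unitarymx_inj.
have [N [Ni [pdN NN NiN NNi hermNi]]] := pdmx_sqrt pdK.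
exists N, (fun i => H i *m A i *m W^t* *m Ni); split => //.
- by rewrite NN opprB addrC subrK.
- have term i : (H i *m A i *m W^t* *m Ni)^t* *m (H i *m A i *m W^t* *m Ni) =
      Ni *m W *m ((A i)^t* *m Rm i *m A i) *m W^t* *m Ni.
    by rewrite !adjmxM trmxCK hermNi hermH -HHR !mulmxA.
  rewrite (eq_bigr _ (fun i _ => term i)) -!mulmx_suml -mulmx_sumr -/S.
  have -> : Ni *m W *m S *m W^t* *m Ni = Ni *m (W *m S *m W^t*) *m Ni.
    by rewrite !mulmxA.
  by rewrite -KS -NN mulmxA NiN mul1mx NNi.
- move=> i; rewrite !mulmxA GH mul1mx -(mulmxA _ Ni) NiN mulmx1.
  by rewrite (mulmxKtV _ hW).
Qed.
End MatrixEquation.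

Section Transfer.
Local Open Scope ring_scope.
Local Open Scope sesquilinear_scope.
Context {n : nat}.
Implicit Types (X Y U : mat n) (x : vec n).

Definition toC (c : Defs.C) : R[i] := Complex (re c) (im c).
Definition ofC (z : R[i]) : Defs.C := mkC (complex.Re z) (complex.Im z).

Lemma toCK : cancel ofC toC. Proof. by case. Qed.

Lemma toC_sum k (F : 'I_k -> Defs.C) :
  toC (\big[Cadd/C0]_(j < k) F j) = \sum_(j < k) toC (F j).
Proof. by apply: (big_morph toC) => // -[a b] [c d]. Qed.

Lemma toC_mul a b : toC (Cmul a b) = toC a * toC b.
Proof. by case: a b => [? ?] [? ?]. Qed.

Lemma toC_conj a : toC (Cconj a) = (toC a)^*.
Proof. by case: a. Qed.

Definition toM X : 'M[R[i]]_n := \matrix_(i, j) toC (X i j).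
Definition ofM (P : 'M[R[i]]_n) : mat n := fun i j => ofC (P i j).

Lemma toMK : cancel ofM toM.
Proof. by move=> P; apply/matrixP => i j; rewrite mxE toCK. Qed.

Lemma ofMK : cancel toM ofM.
Proof.
by move=> X; do 2!apply: functional_extensionality => ?; rewrite /ofM mxE; case: (X _ _).
Qed.

Lemma toM_inj : injective toM. Proof. exact: can_inj ofMK. Qed.

Lemma toM_mmul X Y : toM (mmul X Y) = toM X *m toM Y.
Proof.
apply/matrixP => i j; rewrite !mxE /mmul /Csum toC_sum.
by apply: eq_bigr => k _; rewrite !mxE; case: (X i k) (Y k j).
Qed.

Lemma toM_madj X : toM (madj X) = (toM X)^t*.
Proof. by apply/matrixP => i j; rewrite !mxE /madj; case: (X j i). Qed.

Lemma toM_msub X Y : toM (msub X Y) = toM X - toM Y.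
Proof. by apply/matrixP => i j; rewrite !mxE /msub; case: (X i j) (Y i j). Qed.

Lemma toM_mdiag d : toM (mdiag d) = dmx d.
Proof. by apply/matrixP => i j; rewrite !mxE /mdiag; case: eqP. Qed.

Lemma toM_mid : toM (@mid n) = 1%:M.
Proof. by apply/matrixP => i j; rewrite !mxE /mid; case: eqP. Qed.

Lemma toM_msum m (F : 'I_m -> mat n) : toM (msum F) = \sum_(i < m) toM (F i).
Proof.
apply/matrixP => i j; rewrite !mxE /msum toC_sum summxE.
by apply: eq_bigr => k _; rewrite mxE.
Qed.

Lemma toM_spec U d : toM (mmul (madj U) (mmul (mdiag d) U)) = spec (toM U) d.
Proof. by rewrite !toM_mmul toM_madj toM_mdiag mulmxA. Qed.

Lemma toM_conjg U Q : toM (mmul U (mmul Q (madj U))) = toM U *m toM Q *m (toM U)^t*.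
Proof. by rewrite !toM_mmul toM_madj mulmxA. Qed.

Lemma toM_factor P V N U :
  toM (mmul P (mmul V (mmul N U))) = toM P *m toM V *m toM N *m toM U.
Proof. by rewrite !toM_mmul !mulmxA. Qed.

Lemma toM_gram m (V : 'I_m -> mat n) :
  toM (msum (fun i => mmul (madj (V i)) (V i))) = \sum_i (toM (V i))^t* *m toM (V i).
Proof. by rewrite toM_msum; apply: eq_bigr => i _; rewrite toM_mmul toM_madj. Qed.

Lemma toM_residual m X (A Rm : 'I_m -> mat n) :
  toM (msub X (msum (fun i => mmul (madj (A i)) (mmul (Rm i) (A i))))) =
  toM X - \sum_i (toM (A i))^t* *m toM (Rm i) *m toM (A i).
Proof.
rewrite toM_msub toM_msum; congr (_ - _); apply: eq_bigr => i _.
by rewrite !toM_mmul toM_madj mulmxA.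
Qed.

Definition tocol x : 'cV[R[i]]_n := \col_i toC (x i).

Lemma toC_quadform X x : toC (quadform X x) = qform (toM X) (tocol x).
Proof.
rewrite qformE /quadform /Csum toC_sum; apply: eq_bigr => i _.
rewrite toC_sum; apply: eq_bigr => j _.
by rewrite !toC_mul toC_conj !mxE.
Qed.

Lemma tocol_neq0 x : (exists i, x i <> C0) <-> tocol x != 0.
Proof.
split=> [[i xi0] | /matrix0Pn [i [j]]]; last first.
  by rewrite mxE => /eqP xi0; exists i => xi0'; apply: xi0; rewrite xi0'.
apply/matrix0Pn; exists i, 0; rewrite mxE; apply/eqP => /(congr1 ofC).
by case: (x i) xi0.
Qed.

Lemma posdefE X : posdef X <-> pdmx (toM X).
Proof.
have hermE : Defs.hermitian X <-> (toM X)^t* = toM X.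
  by rewrite /Defs.hermitian -toM_madj; split=> [-> // | /toM_inj].
rewrite /posdef /pdmx hermE; split=> -[herm pos]; split=> //.
  move=> v v0; have vE : tocol (fun i => ofC (v i 0)) = v.
    by apply/matrixP => i j; rewrite !mxE toCK ord1.
  by rewrite -vE -toC_quadform; apply/RltP/pos/tocol_neq0; rewrite vE.
by move=> x /tocol_neq0 x0; have := pos _ x0; rewrite -toC_quadform => /RltP.
Qed.

Lemma unitaryE U : unitary U <-> toM U \is unitarymx.
Proof.
rewrite /unitary; split=> [[_ UUt] | hU].
  by apply/unitarymxP; rewrite -toM_madj -toM_mmul UUt toM_mid.
split; apply: toM_inj; rewrite toM_mmul toM_madj toM_mid.
  exact: unitarymx_adjK.
exact/unitarymxP.
Qed.

Lemma invertible_inj A (v : 'cV[R[i]]_n) : invertible A -> v != 0 -> toM A *m v != 0.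
Proof.
move=> [B [_ BA]]; apply: contra => /eqP Av0.
have /(congr1 toM) := BA; rewrite toM_mmul toM_mid => BA1.
by rewrite -[v]mul1mx -BA1 -mulmxA Av0 mulmx0.
Qed.
End Transfer.

Section RealPowers.
Local Open Scope ring_scope.
Local Open Scope sesquilinear_scope.
Context {n : nat}.
Implicit Types (W : 'M[R[i]]_n) (d : 'I_n -> R).

Definition rpow d (t : R) : 'I_n -> R := fun k => Rpower (d k) t.

Lemma rpow_gt0 d t k : 0 < rpow d t k.
Proof. exact/RltP/exp_pos. Qed.

Lemma spec_rpowD W d a b c : W \is unitarymx -> a + b = c ->
  spec W (rpow d a) *m spec W (rpow d b) = spec W (rpow d c).
Proof.
move=> hW <-; rewrite (specM _ _ hW); apply: eq_spec => k.
exact: (esym (Rpower_plus _ _ _)).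
Qed.

Lemma spec_rpow_inv W d a b : W \is unitarymx -> a + b = 0 ->
  spec W (rpow d a) *m spec W (rpow d b) = 1%:M.
Proof.
move=> hW /(spec_rpowD d hW) ->; rewrite -(spec1 hW); apply: eq_spec => k.
by rewrite /rpow /Rpower Rmult_0_l exp_0.
Qed.

(* [matpow] is the spectral power: if [P = W^* diag(d) W] with [d > 0], then
   [P^t = W^* diag(d^t) W], whichever diagonalization [matpow] picked. *)
Lemma matpow_spec (P : mat n) W d t : W \is unitarymx -> (forall k, 0 < d k) ->
  toM P = spec W d -> toM (matpow P t) = spec W (rpow d t).
Proof.
move=> hW d_gt0 PW; rewrite /matpow.
case: excluded_middle_informative => [powP | noPow]; last first.
  exfalso; apply: noPow; exists (ofM (spec W (rpow d t))), (ofM W), d.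
  split; first by apply/unitaryE; rewrite toMK.
  split; first by move=> k; apply/RltP.
  by split; apply: toM_inj; rewrite toM_spec !toMK ?PW.
case: constructive_indefinite_description => Y [U [e [/unitaryE hU [_ [PU YE]]]]] /=.
rewrite YE toM_spec; apply: (spec_fun (fun x => Rpower x t) hU hW).
by rewrite -toM_spec -PU.
Qed.
End RealPowers.

Section Equation.
Local Open Scope ring_scope.
Local Open Scope sesquilinear_scope.
Context {n m : nat}.

(* Sufficiency, for exponents with [e_i + p_i + e_i = 0] (in the theorem
   [e_i = -p_i/2]). *)
Lemma solution_of_factorization (e p : 'I_m -> R) (A : 'I_m -> mat n) (Q : mat n) :
  (forall i, e i + p i + e i = 0) -> posdef Q ->
  forall (U : mat n) (d : 'I_n -> R) (N : mat n) (V : 'I_m -> mat n),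
  unitary U ->
  posdef (msub (mdiag d) (mmul U (mmul Q (madj U)))) ->
  posdef N ->
  msub (mdiag d) (mmul N N) = mmul U (mmul Q (madj U)) ->
  msum (fun i => mmul (madj (V i)) (V i)) = @mid n ->
  (forall i, A i = mmul (matpow (mmul (madj U) (mmul (mdiag d) U)) (e i))
                       (mmul (V i) (mmul N U))) ->
  let X := mmul (madj U) (mmul (mdiag d) U) in
  posdef X /\
  msub X (msum (fun i => mmul (madj (A i)) (mmul (matpow X (p i)) (A i)))) = Q.
Proof.
move=> exps /posdefE pdQ U d N V /unitaryE hU /posdefE pdK /posdefE [hermN _].
move=> /(congr1 toM) NQ /(congr1 toM) isoV AE X.
rewrite toM_msub toM_mdiag toM_mmul toM_conjg in NQ.
rewrite toM_gram toM_mid in isoV.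
have psdUQ : psdmx (toM U *m toM Q *m (toM U)^t*).
  by rewrite -{1}[toM U]trmxCK; exact/psdmx_congr/pdmx_psd.
rewrite toM_msub toM_mdiag toM_conjg in pdK.
have d_gt0 := dmx_gt0 pdK psdUQ.
have hX : toM X = spec (toM U) d := toM_spec U d.
have hpow t := matpow_spec t hU d_gt0 hX.
split; first by apply/posdefE; rewrite hX; exact: pdmx_spec.
apply: toM_inj; rewrite toM_residual hX.
under eq_bigr => i _ do rewrite AE toM_factor !hpow.
apply: (factored_solution hU hermN _ _ isoV NQ) => i; first exact: spec_adj.
by rewrite (spec_rpowD d hU (erefl _)) (spec_rpow_inv d hU (exps i)).
Qed.

(* Necessity, for exponents with [h_i + h_i = p_i] and [e_i + h_i = 0] (in the
   theorem [h_i = p_i/2] and [e_i = -p_i/2]). *)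
Lemma factorization_of_solution (e h p : 'I_m -> R) (A : 'I_m -> mat n) (Q : mat n) :
  (forall i, h i + h i = p i) -> (forall i, e i + h i = 0) -> (0 < m)%N ->
  (forall i, invertible (A i)) ->
  (exists X : mat n, posdef X /\
      msub X (msum (fun i => mmul (madj (A i)) (mmul (matpow X (p i)) (A i)))) = Q) ->
  exists (U : mat n) (d : 'I_n -> R) (N : mat n) (V : 'I_m -> mat n),
    unitary U /\
    posdef (msub (mdiag d) (mmul U (mmul Q (madj U)))) /\
    posdef N /\
    msub (mdiag d) (mmul N N) = mmul U (mmul Q (madj U)) /\
    msum (fun i => mmul (madj (V i)) (V i)) = @mid n /\
    (forall i, A i = mmul (matpow (mmul (madj U) (mmul (mdiag d) U)) (e i))
                         (mmul (V i) (mmul N U))).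
Proof.
move=> hh eh m_gt0 invA [X [/posdefE pdX XQ]].
have [W [lam [hW lam_gt0 XW]]] := spectral_pdmx pdX.
have hpow t := matpow_spec t hW lam_gt0 XW.
have injA i (v : 'cV[R[i]]_n) : v != 0 -> toM (A i) *m v != 0.
  exact: invertible_inj.
have pdR i : pdmx (toM (matpow X (p i))).
  by rewrite hpow; exact: pdmx_spec hW (rpow_gt0 lam (p i)).
have HHR i : spec W (rpow lam (h i)) *m spec W (rpow lam (h i)) = toM (matpow X (p i)).
  by rewrite (spec_rpowD lam hW (hh i)) hpow.
have GH i : toM (matpow X (e i)) *m spec W (rpow lam (h i)) = 1%:M.
  by rewrite hpow (spec_rpow_inv lam hW (eh i)).
have XQ' : spec W lam - \sum_i (toM (A i))^t* *m toM (matpow X (p i)) *m toM (A i) = toM Q.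
  by rewrite -XW -toM_residual XQ.
have [N [V [pdK pdN NQ isoV AE]]] := solution_factors (Ordinal m_gt0) hW injA pdR
  (fun i => spec_adj W (rpow lam (h i))) HHR GH XQ'.
have XE : X = mmul (madj (ofM W)) (mmul (mdiag lam) (ofM W)).
  by apply: toM_inj; rewrite toM_spec toMK.
exists (ofM W), lam, (ofM N), (fun i => ofM (V i)); rewrite -XE.
split; first by apply/unitaryE; rewrite toMK.
split; first by apply/posdefE; rewrite toM_msub toM_mdiag toM_conjg toMK.
split; first by apply/posdefE; rewrite toMK.
split; first by apply: toM_inj; rewrite toM_msub toM_mdiag toM_mmul toM_conjg !toMK.
split; first by apply: toM_inj; rewrite toM_gram toM_mid; under eq_bigr do rewrite toMK.
by move=> i; apply: toM_inj; rewrite toM_factor !toMK AE.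
Qed.
End Equation.

Local Open Scope R_scope.

Theorem theorem2 (n m : nat) (hm : (1 <= m)%N)
  (A : 'I_m -> mat n) (p : 'I_m -> R) (Q : mat n)
  (hA : forall i, invertible (A i)) (hp : forall i, 0 < p i) (hQ : posdef Q) :
  ((exists X : mat n, posdef X /\
      msub X (msum (fun i => mmul (madj (A i)) (mmul (matpow X (p i)) (A i)))) = Q)
   <->
   (exists (U : mat n) (d : 'I_n -> R) (N : mat n) (V : 'I_m -> mat n),
      unitary U /\
      posdef (msub (mdiag d) (mmul U (mmul Q (madj U)))) /\
      posdef N /\
      msub (mdiag d) (mmul N N) = mmul U (mmul Q (madj U)) /\
      msum (fun i => mmul (madj (V i)) (V i)) = @mid n /\
      (forall i, A i = mmul (matpow (mmul (madj U) (mmul (mdiag d) U)) (- p i / 2))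
                           (mmul (V i) (mmul N U)))))
  /\
  (forall (U : mat n) (d : 'I_n -> R) (N : mat n) (V : 'I_m -> mat n),
      unitary U ->
      posdef (msub (mdiag d) (mmul U (mmul Q (madj U)))) ->
      posdef N ->
      msub (mdiag d) (mmul N N) = mmul U (mmul Q (madj U)) ->
      msum (fun i => mmul (madj (V i)) (V i)) = @mid n ->
      (forall i, A i = mmul (matpow (mmul (madj U) (mmul (mdiag d) U)) (- p i / 2))
                           (mmul (V i) (mmul N U))) ->
      let X := mmul (madj U) (mmul (mdiag d) U) in
      posdef X /\
      msub X (msum (fun i => mmul (madj (A i)) (mmul (matpow X (p i)) (A i)))) = Q).
Proof.
have exps i : - p i / 2 + p i + - p i / 2 = 0 by field.
have halves i : p i / 2 + p i / 2 = p i by field.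
have inverse_half i : - p i / 2 + p i / 2 = 0 by field.
have sufficiency := solution_of_factorization (A := A) exps hQ.
split; last exact: sufficiency.
split; first exact: factorization_of_solution halves inverse_half hm hA.
move=> [U [d [N [V [hU [hK [hN [hNQ [hV hUV]]]]]]]]].
by eexists; exact: sufficiency hU hK hN hNQ hV hUV.
Qed.
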